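(* Let $p\ge1$ be an integer. For all $x,y\in[0,1]^p$, $\overline{\Delta}_{\mathrm{JML1}}(x,y)\le\overline{\Delta}_{\mathrm{JML2}}(x,y)$.
   Context: For $x,y \in [0,1]^p$ write $\|x\|_1=\sum_{i=1}^p |x_i|$ and $\langle x,y\rangle=\sum_{i=1}^p x_iy_i$. Define $\overline{\Delta}_{\mathrm{JML1}}(x,y) = 1 - \frac{\|x\|_1+\|y\|_1-\|x-y\|_1}{\|x\|_1+\|y\|_1+\|x-y\|_1}$ and $\overline{\Delta}_{\mathrm{JML2}}(x,y) = 1 - \frac{\langle x,y\rangle}{\langle x,y\rangle+\|x-y\|_1}$. Both denominators vanish only when $x=y=0$; by convention both functions take the value $0$ at $(x,y)=(0,0)$. *)

From mathcomp Require Import all_boot all_order all_algebra.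
Set Implicit Arguments. Unset Strict Implicit. Unset Printing Implicit Defensive.
Import Order.TTheory GRing.Theory Num.Theory.
Local Open Scope ring_scope.

Definition l1norm (R : realFieldType) (p : nat) (x : 'I_p -> R) : R :=
  \sum_(i < p) `|x i|.

Definition inner (R : realFieldType) (p : nat) (x y : 'I_p -> R) : R :=
  \sum_(i < p) x i * y i.

Definition in_unit_cube (R : realFieldType) (p : nat) (x : 'I_p -> R) : Prop :=
  forall i, 0 <= x i <= 1.

(* Both take value 0 at (0,0) by convention. *)
Definition JML1 (R : realFieldType) (p : nat) (x y : 'I_p -> R) : R :=
  if [forall i, (x i == 0) && (y i == 0)] then 0 else
  1 - (l1norm x + l1norm y - l1norm (fun i => x i - y i)) /
      (l1norm x + l1norm y + l1norm (fun i => x i - y i)).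

Definition JML2 (R : realFieldType) (p : nat) (x y : 'I_p -> R) : R :=
  if [forall i, (x i == 0) && (y i == 0)] then 0 else
  1 - inner x y / (inner x y + l1norm (fun i => x i - y i)).

From mathcomp Require Import all_boot all_order all_algebra.
From mathcomp Require Import ring lra.
Import Order.TTheory GRing.Theory Num.Theory.
Local Open Scope ring_scope.

(* Write a = |x|_1 + |y|_1, d = |x - y|_1 and s = <x, y>.  Away from (0, 0)
   the two dissimilarities are 1 - (a - d)/(a + d) and 1 - s/(s + d), and the
   inequality reduces to 2 s + d <= a.  This holds coordinatewise: for
   u, v in [0, 1], u + v - |u - v| = 2 min(u, v) >= 2 u v. *)

Section Vectors.
Context {R : realFieldType} {p : nat}.
Implicit Types x y : 'I_p -> R.

Lemma l1norm_ge0 x : 0 <= l1norm x.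
Proof. by apply: sumr_ge0 => i _. Qed.

Lemma l1norm_eq0 x : (l1norm x == 0) = [forall i, x i == 0].
Proof.
rewrite psumr_eq0 //; apply/allP/forallP => [x0 i | x0 i _] /=.
  by rewrite -normr_eq0; apply: x0; apply: mem_index_enum.
by rewrite normr_eq0.
Qed.

Lemma inner_ge0 x y :
  (forall i, 0 <= x i) -> (forall i, 0 <= y i) -> 0 <= inner x y.
Proof. by move=> x0 y0; apply: sumr_ge0 => i _; apply: mulr_ge0. Qed.

Lemma double_mul_add_dist_le (u v : R) :
  0 <= u <= 1 -> 0 <= v <= 1 -> 2 * (u * v) + `|u - v| <= u + v.
Proof. by move=> /andP[? ?] /andP[? ?]; case: (lerP v u) => ?; nra. Qed.

Lemma double_inner_add_l1dist_le x y :
  in_unit_cube x -> in_unit_cube y ->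
  2 * inner x y + l1norm (fun i => x i - y i) <= l1norm x + l1norm y.
Proof.
move=> hx hy; rewrite /inner /l1norm mulr_sumr -!big_split /=.
apply: ler_sum => i _; have := hx i; have := hy i.
move=> /[dup] /andP[/ger0_norm -> _] hyi /[dup] /andP[/ger0_norm -> _] hxi.
exact: double_mul_add_dist_le.
Qed.

End Vectors.

Lemma one_sub_ratio_le {R : realFieldType} (a s d : R) :
  0 <= s -> 0 <= d -> 0 < a -> 2 * s + d <= a ->
  1 - (a - d) / (a + d) <= 1 - s / (s + d).
Proof.
move=> s0 d0 a0 le_a; rewrite lerD2l lerN2.
have [->|s_neq0] := eqVneq s 0.
  by rewrite mul0r; apply: divr_ge0; lra.
have s_gt0 : 0 < s by rewrite lt_def s_neq0.
rewrite ler_pdivrMr; last by lra.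
rewrite mulrAC ler_pdivlMr; last by lra.
rewrite -subr_ge0.
have -> : (a - d) * (s + d) - s * (a + d) = d * (a - 2 * s - d) by ring.
by apply: mulr_ge0 => //; lra.
Qed.

Theorem theorem4 (R : realFieldType) (p : nat) (hp : (1 <= p)%N)
  (x y : 'I_p -> R) :
  in_unit_cube x -> in_unit_cube y -> JML1 x y <= JML2 x y.
Proof.
move=> hx hy; rewrite /JML1 /JML2; case: ifP => [//|not_both0].
have a_gt0 : 0 < l1norm x + l1norm y.
  rewrite lt_def addr_ge0 ?l1norm_ge0 // andbT paddr_eq0 ?l1norm_ge0 //.
  rewrite !l1norm_eq0; apply: contraFN not_both0 => /andP[/forallP x0 /forallP y0].
  by apply/forallP => i; rewrite x0 y0.
apply: one_sub_ratio_le; rewrite ?l1norm_ge0 ?double_inner_add_l1dist_le //.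
by apply: inner_ge0 => i; [case/andP: (hx i) | case/andP: (hy i)].
Qed.
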